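(* The empty space is the only finitely generated object of the category $\mathsf{Top}_0$ of T$_0$-spaces and continuous maps.
   Context: An object $X$ of a category $\mathcal{C}$ is finitely generated if for every directed diagram $(Z_i)_{i\in I}$ in $\mathcal{C}$ (indexed by a directed poset, i.e. every finite subset has an upper bound) all of whose connecting morphisms $z_{i,j}$ are monomorphisms, with colimit cocone $c_i:Z_i\to Z$ in $\mathcal{C}$, every morphism $f:X\to Z$ factorizes as $f=c_i\cdot g$ for some $i$ and $g:X\to Z_i$, and if also $f=c_i\cdot g'$ then $z_{i,j}\cdot g=z_{i,j}\cdot g'$ for some connecting morphism $z_{i,j}$. *)

(* topological spaces are MathComp-Analysis
   [topologicalType]s, T0 = [kolmogorov_space], morphisms of Top_0 are
   continuous functions (equality of morphisms = equality of functions). *)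
From HB Require Import structures.
From mathcomp Require Import all_boot all_order.
From mathcomp Require Import boolp classical_sets topology separation_axioms.
Set Implicit Arguments. Unset Strict Implicit. Unset Printing Implicit Defensive.
Local Open Scope classical_set_scope.

Definition Top0_mono (A B : topologicalType) (f : A -> B) : Prop :=
  forall (W : topologicalType), kolmogorov_space W ->
  forall g h : W -> A, continuous g -> continuous h ->
  f \o g = f \o h -> g = h.

(* (I, le) is a directed poset: a partial order in which every finite
   subset (given as a list, including the empty one) has an upper bound. *)
Definition directed_poset (I : Type) (le : I -> I -> Prop) : Prop :=
  [/\ (forall i, le i i),
      (forall i j k, le i j -> le j k -> le i k),
      (forall i j, le i j -> le j i -> i = j) &
      (forall s : seq I, exists j, foldr (fun i P => le i j /\ P) True s)].

Definition mono_directed_diagram (I : Type) (le : I -> I -> Prop)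
    (Z : I -> topologicalType) (z : forall i j, le i j -> Z i -> Z j) : Prop :=
  directed_poset le /\
  [/\ (forall i, kolmogorov_space (Z i)),
      (forall i j (p : le i j), continuous (z i j p)),
      (forall i (p : le i i) x, z i i p x = x),
      (forall i j k (p : le i j) (q : le j k) (r : le i k) x,
          z j k q (z i j p x) = z i k r x) &
      (forall i j (p : le i j), Top0_mono (z i j p))].

Definition Top0_cocone (I : Type) (le : I -> I -> Prop)
    (Z : I -> topologicalType) (z : forall i j, le i j -> Z i -> Z j)
    (W : topologicalType) (c : forall i, Z i -> W) : Prop :=
  kolmogorov_space W /\
  (forall i, continuous (c i)) /\
  (forall i j (p : le i j), c j \o z i j p = c i).

Definition Top0_colimit (I : Type) (le : I -> I -> Prop)
    (Z : I -> topologicalType) (z : forall i j, le i j -> Z i -> Z j)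
    (W : topologicalType) (c : forall i, Z i -> W) : Prop :=
  Top0_cocone z c /\
  forall (V : topologicalType) (d : forall i, Z i -> V), Top0_cocone z d ->
    (exists u : W -> V, continuous u /\ forall i, u \o c i = d i) /\
    (forall u u' : W -> V, continuous u -> continuous u' ->
       (forall i, u \o c i = d i) -> (forall i, u' \o c i = d i) -> u = u').

Definition Top0_finitely_generated (X : topologicalType) : Prop :=
  forall (I : Type) (le : I -> I -> Prop)
         (Z : I -> topologicalType) (z : forall i j, le i j -> Z i -> Z j)
         (W : topologicalType) (c : forall i, Z i -> W),
    mono_directed_diagram z -> Top0_colimit z c ->
    forall f : X -> W, continuous f ->
      (exists i (g : X -> Z i), continuous g /\ f = c i \o g) /\
      (forall i (g g' : X -> Z i), continuous g -> continuous g' ->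
         f = c i \o g -> f = c i \o g' ->
         exists j (p : le i j), z i j p \o g = z i j p \o g').

(** The colimit in Top_0 of a directed diagram of monomorphisms can collapse
    distinct points.  On every Z_n the underlying set is nat, the open sets
    being the empty set and the sets that contain a tail [k, oo) and are
    closed under predecessor below n; the identities Z_i -> Z_j (i <= j) are
    continuous injections.  A set open in every Z_n is empty or everything,
    so any cocone into a T0 space is constant and the colimit is a point.
    The constant maps 0 and 1 from a nonempty X to Z_0 then agree in the
    colimit without ever being identified along the diagram, so X cannot be
    finitely generated.  Conversely, the empty space trivially is; neither
    direction uses that X itself is T0. *)

From HB Require Import structures.
From mathcomp Require Import all_boot all_order zify.
From mathcomp Require Import boolp classical_sets topology separation_axioms.
Local Open Scope classical_set_scope.

Lemma inj_Top0_mono (A B : topologicalType) (f : A -> B) :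
  injective f -> Top0_mono f.
Proof.
move=> f_inj W _ g h _ _ fgh; apply: funext => w.
by apply: f_inj; have := congr1 (fun k => k w) fgh.
Qed.

Lemma kolmogorov_open_eq (T : topologicalType) : kolmogorov_space T ->
  forall x y : T, (forall A, open A -> A x -> A y) ->
    (forall A, open A -> A y -> A x) -> x = y.
Proof.
move=> T0 x y xy yx; apply/eqP/negP => /negP /T0 [A [[/set_mem + /set_mem]|
  [/set_mem + /set_mem]]]; rewrite nbhsE => -[B [oB Bp] BA] nAp; apply: nAp.
- exact: BA _ (xy _ oB Bp).
- exact: BA _ (yx _ oB Bp).
Qed.

Lemma leq_directed_poset : directed_poset (fun i j => (i <= j)%N).
Proof.
split=> [i|i j k|i j ij ji|s]; [exact: leqnn|exact: leq_trans|lia|].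
suff ub b : (foldr maxn 0 s <= b)%N -> foldr (fun i P => (i <= b)%N /\ P) True s.
  by exists (foldr maxn 0 s); exact: ub.
by elim: s => //= i s IHs; rewrite geq_max => /andP[ib /IHs].
Qed.

Definition tail_open (n : nat) (U : set nat) : Prop :=
  U = set0 \/ ((exists k, forall m, (k <= m)%N -> U m) /\
               forall x, (x < n)%N -> U x.+1 -> U x).

Definition tailnat (n : nat) : Type := nat.
HB.instance Definition _ n := Choice.on (tailnat n).

Lemma tail_openT n : tail_open n setT.
Proof. by right; split=> //; exists 0. Qed.

Lemma tail_openI n : setI_closed (tail_open n).
Proof.
move=> A B [->|[[k Ak] Adown]]; first by left; rewrite set0I.
move=> [->|[[l Bl] Bdown]]; first by left; rewrite setI0.
right; split=> [|x xn [Ax Bx]]; last by split; [exact: Adown | exact: Bdown].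
exists (maxn k l) => m; rewrite geq_max => /andP[km lm].
by split; [exact: Ak | exact: Bl].
Qed.

Lemma tail_openU n (I : Type) (F : I -> set nat) :
  (forall i, tail_open n (F i)) -> tail_open n (\bigcup_(i in setT) F i).
Proof.
move=> oF; have [[i [y Fiy]]|F0] := pselect (exists i y, F i y); last first.
  by left; apply/seteqP; split=> // y [i _ Fiy]; apply: F0; exists i, y.
right; split.
  case: (oF i) => [Fi0|[[k Fik] _]]; first by rewrite Fi0 in Fiy.
  by exists k => m km; exists i => //; exact: Fik.
move=> x xn [j _ Fjx]; exists j => //.
by case: (oF j) => [Fj0|[_ Fjdown]]; [rewrite Fj0 in Fjx | exact: Fjdown].
Qed.

HB.instance Definition _ n :=
  isOpenTopological.Build (tailnat n) (@tail_openT n) (@tail_openI n) (@tail_openU n).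

Lemma tail_open_antitone i j (U : set nat) :
  (i <= j)%N -> tail_open j U -> tail_open i U.
Proof.
move=> ij [->|[tail down]]; [by left | right; split=> // x xi].
by apply: down; exact: leq_trans xi ij.
Qed.

Lemma tail_open_all_trivial (U : set nat) :
  (forall n, tail_open n U) -> forall x y, U x -> U y.
Proof.
move=> oU x y Ux; case: (oU 0) => [U0|[[k Uk] _]]; first by rewrite U0 in Ux.
have down m z : (z <= m)%N -> U m -> U z.
  elim: m => [|m IHm]; first by rewrite leqn0 => /eqP ->.
  rewrite leq_eqVlt => /orP[/eqP -> //|zm] Um; apply: IHm zm _.
  by case: (oU m.+1) => [U0|[_ Udown]]; [rewrite U0 in Um | exact: Udown].
by apply: (down (maxn k y)); [exact: leq_maxr | apply: Uk; exact: leq_maxl].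
Qed.

Lemma tailnat_kolmogorov n : kolmogorov_space (tailnat n).
Proof.
have sep (a b : tailnat n) : (a < b)%N ->
    exists A : set (tailnat n), A \in nbhs a /\ b \in ~` A.
  move=> ab; exists [set m | (m < b)%N \/ (maxn n b < m)%N].
  split; last by rewrite inE /=; lia.
  rewrite inE; apply: open_nbhs_nbhs; split; last by left.
  right; split=> [|x xn /=]; last by lia.
  by exists (maxn n b).+1 => m bm; right.
move=> a b; rewrite neq_ltn => /orP[/sep|/sep] [A sepA]; exists A; by [left|right].
Qed.

Definition tail_incl (i j : nat) (_ : (i <= j)%N) : tailnat i -> tailnat j := id.

Lemma tail_incl_continuous i j (ij : (i <= j)%N) : continuous (tail_incl i j ij).
Proof. by apply/continuousP => A; exact: tail_open_antitone. Qed.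

Lemma tail_mono_directed_diagram : mono_directed_diagram tail_incl.
Proof.
split; first exact: leq_directed_poset.
split=> //; [exact: tailnat_kolmogorov | exact: tail_incl_continuous |].
by move=> i j ij; apply: inj_Top0_mono.
Qed.

Lemma tail_cocone_const {V : topologicalType} {d : forall i, tailnat i -> V} :
  Top0_cocone tail_incl d -> forall i x, d i x = d 0 0.
Proof.
move=> [V_T0 [d_cont d_comp]].
have d_eq i : d i = d 0 := d_comp 0 i (leq0n i).
have open_preim B : open B -> forall n, tail_open n (d 0 @^-1` B).
  by move=> oB n; rewrite -(d_eq n); exact: (continuousP _).1 (d_cont n) B oB.
move=> i x; rewrite d_eq; apply: (@kolmogorov_open_eq _ V_T0) => B oB;
  exact: tail_open_all_trivial (open_preim B oB) _ _.
Qed.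

Definition one_point : topologicalType := discrete_topology unit.

Lemma tail_colimit : Top0_colimit tail_incl (fun i (_ : tailnat i) => tt : one_point).
Proof.
split.
  split; first by move=> [] [] /eqP.
  by split=> // i; exact: cst_continuous.
move=> V d cone_d; split.
  exists (fun _ => d 0 0); split; first exact: cst_continuous.
  by move=> i; apply: funext => x /=; rewrite (tail_cocone_const cone_d).
move=> u u' _ _ ud u'd; apply: funext => -[].
have := congr1 (fun h => h 0) (ud 0); have := congr1 (fun h => h 0) (u'd 0).
by move=> /= -> ->.
Qed.

Lemma Top0_finitely_generated_empty (X : topologicalType) :
  Top0_finitely_generated X -> [set: X] = set0.
Proof.
move=> fg; apply/seteqP; split=> // x _.
have [_ essentially_unique] := fg _ _ _ _ _ _ tail_mono_directed_diagram
  tail_colimit (fun _ : X => tt) (@cst_continuous _ one_point tt).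
have [j [ij glued]] := essentially_unique 0 (fun _ => 0) (fun _ => 1)
  (@cst_continuous _ (tailnat 0) 0) (@cst_continuous _ (tailnat 0) 1) erefl erefl.
by have := congr1 (fun h => h x) glued.
Qed.

Lemma empty_Top0_finitely_generated (X : topologicalType) :
  [set: X] = set0 -> Top0_finitely_generated X.
Proof.
move=> X0 I le Z z W c [[le_refl _ _ ub] _] _ f _.
have noX (x : X) : False by rewrite -[False]/(@set0 X x) -X0.
have fun_eq (Y : Type) (g h : X -> Y) : g = h by apply: funext => x; case: (noX x).
have [i _] := ub [::].
split; first by exists i, (fun x => match noX x with end); split=> [x|];
  [case: (noX x) | exact: fun_eq].
by move=> j g g' _ _ _ _; exists j, (le_refl j); exact: fun_eq.
Qed.

Theorem corollary5p5 (X : topologicalType) (hX : kolmogorov_space X) :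
  Top0_finitely_generated X <-> [set: X] = set0.
Proof.
split; [exact: Top0_finitely_generated_empty | exact: empty_Top0_finitely_generated].
Qed.
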